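(* For a graph $G$, $\gamma_{(2,2,0)}(G)=3$ if and only if $\gamma_{\times2,t}(G)=\gamma(G)+1=3$.
   Context: All graphs are finite and simple; $N(v)$ is the open neighbourhood. $\gamma_{(2,2,0)}(G)$ is the minimum of $\sum_v f(v)$ over functions $f:V(G)\to\{0,1,2\}$ such that $\sum_{u\in N(v)}f(u)\ge2$ for every $v$ with $f(v)\in\{0,1\}$. $\gamma(G)$ is the domination number and $\gamma_{\times2,t}(G)$ is the minimum size of $S\subseteq V(G)$ such that every vertex has at least two neighbours in $S$ (defined when $G$ has minimum degree at least $2$). *)

From mathcomp Require Import all_boot all_order.
Set Implicit Arguments. Unset Strict Implicit. Unset Printing Implicit Defensive.

Definition simple_graph (T : finType) (e : rel T) : Prop :=
  symmetric e /\ irreflexive e.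

Definition nbhd (T : finType) (e : rel T) (v : T) : {set T} := [set u | e v u].

Definition is_220_fun (T : finType) (e : rel T) (f : {ffun T -> 'I_3}) : bool :=
  [forall v, (f v < 2) ==> (2 <= \sum_(u in nbhd e v) (f u : nat))].

Definition weight (T : finType) (f : {ffun T -> 'I_3}) : nat := \sum_v (f v : nat).

(* gamma_(2,2,0)(G): minimum weight; the default 2|V| is attained by the
   constant-2 function (always feasible), so this is the true minimum. *)
Definition gamma_220 (T : finType) (e : rel T) : nat :=
  \big[minn/(#|T| * 2)]_(f : {ffun T -> 'I_3} | is_220_fun e f) weight f.

Definition dominating (T : finType) (e : rel T) (S : {set T}) : bool :=
  [forall v, (v \in S) || [exists u in S, e v u]].

(* domination number; default #|V| is attained by S = V *)
Definition gamma (T : finType) (e : rel T) : nat :=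
  \big[minn/#|T|]_(S : {set T} | dominating e S) #|S|.

Definition min_deg_ge2 (T : finType) (e : rel T) : Prop :=
  forall v : T, 2 <= #|nbhd e v|.

Definition double_total_dominating (T : finType) (e : rel T) (S : {set T}) : bool :=
  [forall v, 2 <= #|nbhd e v :&: S|].

(* gamma_{x2,t}(G); meaningful only when min_deg_ge2 e holds, in which case
   S = V is feasible and the default #|V| is attained. *)
Definition gamma_x2t (T : finType) (e : rel T) : nat :=
  \big[minn/#|T|]_(S : {set T} | double_total_dominating e S) #|S|.

From mathcomp Require Import all_boot all_order.
From mathcomp Require Import zify.
Import Order.TTheory.

Set Implicit Arguments.
Unset Strict Implicit.
Unset Printing Implicit Defensive.

(* Twice the indicator of a dominating set and the indicator of a double total
   dominating set are (2,2,0)-functions, so gamma_220 <= 2 gamma and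
   gamma_220 <= gamma_x2t.  If a (2,2,0)-function f of weight at most 3 takes
   the value 2 at a, then a dominates: a vertex x outside N[a] carries weight at
   least 2 on its own closed neighbourhood, and f a = 2.  So when gamma >= 2, a
   minimum (2,2,0)-function of weight 3 is 0/1-valued and its support S is a
   double total dominating set of size 3; every vertex has a neighbour among
   any two vertices of S, whence gamma = 2.  When gamma = 2, a
   (2,2,0)-function of weight <= 2 would have no value 1 (that needs weight 3
   on a closed neighbourhood), hence a dominating vertex, so gamma_220 >= 3. *)

Lemma bigminn_attained (I : finType) (P : pred I) (F : I -> nat) d j :
  P j -> (forall i, P i -> F i <= d) ->
  exists2 i, P i & \big[minn/d]_(i | P i) F i = F i.
Proof. by move=> Pj Fd; rewrite -minEnat; have [i] := eq_bigmin _ _ F Pj Fd; exists i. Qed.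

Lemma bigminn_le (I : finType) (P : pred I) (F : I -> nat) d j :
  P j -> \big[minn/d]_(i | P i) F i <= F j.
Proof. by move=> Pj; rewrite -minEnat; exact: (bigmin_le_cond d F Pj). Qed.

Lemma leq_sum_set [T : finType] (F : T -> nat) (A : {pred T}) :
  \sum_(u in A) F u <= \sum_u F u.
Proof. by rewrite [X in _ <= X](bigID [in A]) leq_addr. Qed.

Lemma leq_sum_setU1 [T : finType] (F : T -> nat) [A : {set T}] [a] :
  a \notin A -> F a + \sum_(u in A) F u <= \sum_u F u.
Proof. by move=> aA; rewrite -big_setU1 // leq_sum_set. Qed.

Lemma sum_mem_card (T : finType) (A S : {set T}) :
  \sum_(u in A) (u \in S : nat) = #|A :&: S|.
Proof.
rewrite -sum1_card [RHS]big_mkcond [LHS]big_mkcond /=; apply: eq_bigr => u _.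
by rewrite inE; case: (u \in A); case: (u \in S).
Qed.

Section Domination.
Variables (T : finType) (e : rel T).
Implicit Types (f : {ffun T -> 'I_3}) (S : {set T}).

Local Notation one := (@Ordinal 3 1 isT).
Local Notation two := (@Ordinal 3 2 isT).

Definition indicator_fun (k : 'I_3) S : {ffun T -> 'I_3} :=
  [ffun v => if v \in S then k else ord0].

Lemma indicator_funE k S v :
  (indicator_fun k S v : nat) = if v \in S then (k : nat) else 0.
Proof. by rewrite ffunE; case: (v \in S). Qed.

Lemma indicator_fun1E S v : (indicator_fun one S v : nat) = (v \in S).
Proof. by rewrite indicator_funE; case: (v \in S). Qed.

Lemma weight_indicator k S : weight (indicator_fun k S) = k * #|S|.
Proof.
rewrite /weight; under eq_bigr do rewrite indicator_funE.
by rewrite -big_mkcond sum_nat_const mulnC.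
Qed.

Lemma is_220_indicator1 S :
  is_220_fun e (indicator_fun one S) = double_total_dominating e S.
Proof.
apply/forallP/forallP => H v; move: (H v);
  under eq_bigr do rewrite indicator_fun1E;
  by rewrite sum_mem_card indicator_fun1E; case: (v \in S).
Qed.

Lemma is_220_indicator2 S : dominating e S -> is_220_fun e (indicator_fun two S).
Proof.
move=> /forallP domS; apply/forallP => v; apply/implyP.
rewrite indicator_funE; case: ifPn => //= vS _.
move: (domS v); rewrite (negbTE vS) => /existsP [u /andP [uS evu]].
by rewrite (bigD1 u) ?inE //= indicator_funE uS leq_addr.
Qed.

Lemma indicator_fun1_support f :
  (forall v, f v < 2) -> f = indicator_fun one [set v | f v != ord0].
Proof.
move=> f_lt2; apply/ffunP => v; apply: ord_inj; rewrite indicator_funE inE.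
by move: (f_lt2 v); case: (f v) => [[|[|]]].
Qed.

Lemma weight_le_double_card f : weight f <= #|T| * 2.
Proof. by rewrite -sum_nat_const leq_sum // => v _; rewrite -ltnS. Qed.

Lemma gamma_220_attained : exists2 f, is_220_fun e f & gamma_220 e = weight f.
Proof.
apply: (bigminn_attained (j := [ffun=> two])) => [|f _]; last exact: weight_le_double_card.
by apply/forallP => v; rewrite ffunE.
Qed.

Lemma gamma_220_le_weight [f] : is_220_fun e f -> gamma_220 e <= weight f.
Proof. exact: bigminn_le. Qed.

Lemma gamma_attained : exists2 S, dominating e S & gamma e = #|S|.
Proof.
apply: (bigminn_attained (j := setT)) => [|S _]; last exact: max_card.
by apply/forallP => v; rewrite inE.
Qed.

Lemma gamma_le_card [S] : dominating e S -> gamma e <= #|S|.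
Proof. exact: bigminn_le. Qed.

Lemma gamma_x2t_attained :
  min_deg_ge2 e -> exists2 S, double_total_dominating e S & gamma_x2t e = #|S|.
Proof.
move=> min_deg; apply: (bigminn_attained (j := setT)) => [|S _]; last exact: max_card.
by apply/forallP => v; rewrite setIT.
Qed.

Lemma gamma_x2t_le_card [S] : double_total_dominating e S -> gamma_x2t e <= #|S|.
Proof. exact: bigminn_le. Qed.

Lemma min_deg_ge2_double_total_dominating S :
  double_total_dominating e S -> min_deg_ge2 e.
Proof.
by move=> /forallP dtdS v; rewrite (leq_trans (dtdS v)) ?subset_leq_card ?subsetIl.
Qed.

Lemma double_total_dominating_setD1 S a :
  double_total_dominating e S -> dominating e (S :\ a).
Proof.
move=> /forallP dtdS; apply/forallP => v; apply/orP; right.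
have /card_gt0P [u] : 0 < #|(nbhd e v :&: S) :\ a|.
  by have := dtdS v; rewrite (cardsD1 a); case: (a \in _) => /=; lia.
by rewrite !inE => /and3P [ua evu uS]; apply/existsP; exists u; rewrite !inE ua uS.
Qed.

Lemma gamma_220_le_gamma_x2t : min_deg_ge2 e -> gamma_220 e <= gamma_x2t e.
Proof.
move=> /gamma_x2t_attained [S dtdS ->].
by rewrite -[#|S|]mul1n -(weight_indicator one S) gamma_220_le_weight ?is_220_indicator1.
Qed.

Lemma gamma_220_le_double_gamma : gamma_220 e <= 2 * gamma e.
Proof.
have [S domS ->] := gamma_attained.
by rewrite -(weight_indicator two S) gamma_220_le_weight ?is_220_indicator2.
Qed.

Hypothesis e_irr : irreflexive e.

Lemma sum_closed_nbhd (F : T -> nat) x :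
  \sum_(u in x |: nbhd e x) F u = F x + \sum_(u in nbhd e x) F u.
Proof. by rewrite big_setU1 // inE e_irr. Qed.

Lemma is_220_closed_nbhd [f] x :
  is_220_fun e f -> 2 <= \sum_(u in x |: nbhd e x) f u.
Proof.
move=> /forallP/(_ x)/implyP f220; rewrite sum_closed_nbhd.
by case: (ltnP (f x) 2) => [/f220|]; lia.
Qed.

Lemma is_220_closed_nbhd_one [f x] :
  is_220_fun e f -> (f x : nat) = 1 -> 3 <= \sum_(u in x |: nbhd e x) f u.
Proof.
move=> /forallP/(_ x)/implyP f220 fx1.
by rewrite sum_closed_nbhd fx1 add1n ltnS f220 ?fx1.
Qed.

Lemma dominating_set1_of_220 [f a] :
  is_220_fun e f -> (f a : nat) = 2 -> weight f <= 3 -> dominating e [set a].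
Proof.
move=> f220 fa2 wf; apply/forallP => x; rewrite !in_set1.
case: eqP => //= /eqP xa; apply/existsP; exists a; rewrite in_set1 eqxx /=.
apply: contraT => exa.
have aN : a \notin x |: nbhd e x by rewrite !inE eq_sym negb_or xa exa.
have := leq_sum_setU1 (fun u => f u : nat) aN; have := is_220_closed_nbhd x f220.
rewrite /weight in wf; rewrite fa2 /=; lia.
Qed.

Lemma is_220_lt2_of_gamma_ge2 f :
  2 <= gamma e -> is_220_fun e f -> weight f <= 3 -> forall v, f v < 2.
Proof.
move=> g_ge2 f220 wf v; rewrite ltnNge; apply/negP => fv_ge2.
have fv2 : (f v : nat) = 2 by have := ltn_ord (f v); lia.
by have := gamma_le_card (dominating_set1_of_220 f220 fv2 wf); rewrite cards1; lia.
Qed.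

Lemma gamma_le1_of_gamma_220_le2 : gamma_220 e <= 2 -> gamma e <= 1.
Proof.
have [f f220 ->] := gamma_220_attained => wf.
have closed_le_weight x : \sum_(u in x |: nbhd e x) f u <= weight f.
  exact: leq_sum_set.
have f_ne1 v : (f v : nat) != 1.
  apply/eqP => /(is_220_closed_nbhd_one f220); have := closed_le_weight v; lia.
have [a /eqP fa2 | f_ne2] := pickP (fun v => (f v : nat) == 2).
  by rewrite -(cards1 a) gamma_le_card // (dominating_set1_of_220 f220 fa2) ?(leq_trans wf).
(* Otherwise f vanishes, which no vertex tolerates, so T is empty. *)
apply: leq_trans (gamma_le_card (S := set0) _) _; rewrite ?cards0 //.
apply/forallP => v; have := is_220_closed_nbhd v f220.
rewrite big1 // => u _; have := f_ne1 u; have := f_ne2 u; case: (f u) => [[|[|[|]]]] //.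
Qed.

End Domination.

Theorem theorem32 (T : finType) (e : rel T) (G : simple_graph e) :
  gamma_220 e = 3 <->
  (min_deg_ge2 e /\ gamma_x2t e = 3 /\ gamma e + 1 = 3).
Proof.
have [_ e_irr] := G.
split=> [g220 | [min_deg [gx2t g]]]; last first.
  apply/eqP; rewrite eqn_leq -{1}gx2t gamma_220_le_gamma_x2t //=.
  by rewrite ltnNge; apply/negP => /(gamma_le1_of_gamma_220_le2 e_irr); lia.
have g_ge2 : 2 <= gamma e by have := gamma_220_le_double_gamma e; lia.
have [f f220 wf] := gamma_220_attained e.
have w3 : weight f <= 3 by rewrite -wf g220.
have f_lt2 := is_220_lt2_of_gamma_ge2 e_irr g_ge2 f220 w3.
set S := [set v | f v != ord0].
have dtdS : double_total_dominating e S.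
  by rewrite -is_220_indicator1 -(indicator_fun1_support f_lt2).
have cardS : #|S| = 3.
  by rewrite -g220 wf {1}(indicator_fun1_support f_lt2) weight_indicator mul1n.
have min_deg := min_deg_ge2_double_total_dominating dtdS.
split=> //; split.
  apply/eqP; rewrite eqn_leq -{1}cardS gamma_x2t_le_card //= -g220.
  exact: gamma_220_le_gamma_x2t.
have [a aS] : exists a, a \in S by apply/card_gt0P; rewrite cardS.
have := gamma_le_card (double_total_dominating_setD1 a dtdS).
have := cardsD1 a S; rewrite aS cardS; lia.
Qed.
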